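(* Let $m\ge 3$, $H=B(l_1,\ldots,l_m)$ with $l_1\le l_2\le 2$, and $G=H^2$. Then $G$ is equitably $(m+1)$-choosable.
   Context: All graphs are finite and simple. For $m,l_1,\ldots,l_m\in\mathbb{N}$ with $l_1\le\cdots\le l_m$, $B(l_1,\ldots,l_m)$ is the graph with vertex set $\{u\}\cup\{v_{i,j}: i\in[m], j\in[l_i]\}$ in which, for each $i\in[m]$, consecutive vertices in the sequence $u, v_{i,1},\ldots,v_{i,l_i}$ are adjacent (and there are no other edges). For a graph $H$, $H^2$ has vertex set $V(H)$ with two vertices adjacent iff their distance in $H$ is 1 or 2. A $k$-assignment $L$ assigns to each vertex a set of exactly $k$ colors; an equitable $L$-coloring of $G$ is a proper coloring $f$ with $f(v)\in L(v)$ such that no color is used more than $\lceil |V(G)|/k\rceil$ times; $G$ is equitably $k$-choosable if it has an equitable $L$-coloring for every $k$-assignment $L$. *)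

From mathcomp Require Import all_boot.
Set Implicit Arguments. Unset Strict Implicit. Unset Printing Implicit Defensive.

(* Vertex type of the spider B(l_1,...,l_m), with m = size l and l_i = nth 0 l (i-1).
   None is the center u; Some (i; j) is v_{i+1, j+1} (0-based indices). *)
Definition spider_vertex (l : seq nat) : finType :=
  option {i : 'I_(size l) & 'I_(nth 0 l i)}.

Definition spider_adj (l : seq nat) (x y : spider_vertex l) : bool :=
  match x, y with
  | None, None => false
  | None, Some q => val (tagged q) == 0
  | Some p, None => val (tagged p) == 0
  | Some p, Some q =>
      (tag p == tag q) &&
      (((val (tagged p)).+1 == val (tagged q)) || ((val (tagged q)).+1 == val (tagged p)))
  end.

Definition square_adj (V : finType) (e : rel V) : rel V :=
  fun x y => (x != y) && (e x y || [exists z, e x z && e z y]).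

Definition ceil_div (n k : nat) : nat := (n + k.-1) %/ k.

Definition equitable_L_coloring (V : finType) (e : rel V) (k : nat)
    (C : eqType) (L : V -> seq C) (f : V -> C) : Prop :=
  (forall v, f v \in L v) /\
  (forall x y, e x y -> f x != f y) /\
  (forall c : C, #|[pred v | f v == c]| <= ceil_div #|V| k).

Definition equitably_choosable (V : finType) (e : rel V) (k : nat) : Prop :=
  forall (C : eqType) (L : V -> seq C),
    (forall v, uniq (L v) /\ size (L v) = k) ->
    exists f : V -> C, equitable_L_coloring e k L f.

From mathcomp Require Import all_boot zify.
Set Implicit Arguments. Unset Strict Implicit. Unset Printing Implicit Defensive.

(* The proof is a greedy argument.  Order the vertices by an injective rank and
   cut the ranks, from the top, into blocks of m+1 consecutive values, so that
   there are ceil(|V|/(m+1)) blocks.  Colouring greedily in rank order, while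
   also treating vertices of a common block as conflicting, gives a proper
   L-colouring whose colour classes meet each block at most once, provided
   every vertex has at most m earlier conflicts (greedy_equitable).

   Finally the
   conflict bound is checked for each kind of vertex: away from the center all
   earlier neighbours lie within m ranks below, and around the center the
   shortness of legs 1 and 2 leaves room for the few exceptions. *)

Lemma free_color (C : eqType) (s forbidden : seq C) :
  uniq s -> size forbidden < size s -> exists2 c, c \in s & c \notin forbidden.
Proof.
move=> s_uniq small; apply/hasP; apply: contraLR small => /hasPn s_sub.
by rewrite -leqNgt; apply: uniq_leq_size s_uniq _ => c /s_sub; rewrite negbK.
Qed.

Section GreedyColoring.

Variables (V : finType) (k : nat) (r : V -> nat).
Hypothesis r_inj : injective r.

Lemma greedy_list_coloring (conflict : rel V) (C : eqType) (L : V -> seq C) :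
  (forall v, uniq (L v) /\ size (L v) = k) ->
  (forall v, #|[pred w | (r w < r v) && conflict v w]| < k) ->
  exists f : V -> C, (forall v, f v \in L v) /\
    (forall v w, r w < r v -> conflict v w -> f w != f v).
Proof.
move=> L_ok few.
(* With no vertices the empty colouring works; otherwise lists are nonempty. *)
have [v0 _ | V_empty] := pickP (@predT V); last first.
  exists (fun v => False_rect C (Bool.diff_true_false (V_empty v))).
  by split=> v; have := V_empty v.
have x0 : C.
  have := L_ok v0; case: (L v0) => [|x s] [_ /= size_k]; last exact: x.
  by have := few v0; rewrite -size_k ltn0.
pose colored t f := forall v, r v < t -> f v \in L v /\
  forall w, r w < r v -> conflict v w -> f w != f v.
have extend t : exists f, colored t f.
  elim: t => [|t [f f_ok]]; first by exists (fun=> x0).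
  have [v /eqP rv | no_rank_t] := pickP [pred v | r v == t]; last first.
    exists f => x; rewrite ltnS leq_eqVlt => /orP [/eqP rx | /f_ok //].
    by have := no_rank_t x; rewrite /= rx eqxx.
  pose forbidden := [seq f w | w <- enum [pred w | (r w < r v) && conflict v w]].
  have [|c cL c_new] := @free_color _ (L v) forbidden (L_ok v).1.
    rewrite /forbidden size_map -cardE (L_ok v).2; exact: few.
  exists (fun x => if x == v then c else f x) => x.
  have [-> _ | x_v] := eqVneq x v.
    split=> // w rw conf; have w_v : w != v by apply: contraTneq rw => ->; rewrite ltnn.
    rewrite /= (negbTE w_v); apply: contraNneq c_new => <-.
    by rewrite map_f // mem_enum inE rw conf.
  rewrite ltnS leq_eqVlt -{1}rv (inj_eq r_inj) (negbTE x_v) /= => rx.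
  have [fxL f_sep] := f_ok x rx; split=> // w rw conf.
  have w_v : w != v by apply: contraTneq (ltn_trans rw rx) => ->; rewrite rv ltnn.
  by rewrite (negbTE w_v); exact: f_sep.
have [f f_ok] := extend (\max_(v : V) (r v).+1).
exists f; split=> [v | v w]; first by have [] := f_ok v (leq_bigmax v).
exact: (f_ok v (leq_bigmax v)).2.
Qed.

(* Each colour class then meets
   every block at most once, so it has at most ceil(|V|/k) vertices. *)
Lemma greedy_equitable (e : rel V) (block : V -> nat) :
  irreflexive e -> (forall v, block v < ceil_div #|V| k) ->
  (forall v, #|[pred w | (r w < r v) && [|| e v w, e w v | block w == block v]]| < k) ->
  equitably_choosable e k.
Proof.
move=> e_irr few_blocks few_conflicts C L L_ok.
have [f [fL f_sep]] := greedy_list_coloring L_ok few_conflicts.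
have separated x y : r x != r y -> [|| e x y, e y x | block x == block y] -> f x != f y.
  case: ltngtP => // [rx | ry] _ conf; first by apply: f_sep rx _; rewrite orbCA.
  by rewrite eq_sym; apply: f_sep ry _; rewrite [block y == _]eq_sym.
exists f; split; first exact: fL.
split=> [x y exy | c].
  have [/r_inj xy | rxy] := eqVneq (r x) (r y); first by rewrite xy e_irr in exy.
  by apply: separated; rewrite ?exy.
pose block_of (v : V) : 'I_(ceil_div #|V| k) := Ordinal (few_blocks v).
have block_inj : {in [pred v | f v == c] &, injective block_of}.
  move=> x y /eqP fx /eqP fy /(congr1 val) /= bxy; apply/r_inj/eqP.
  by apply: contraTT (eqxx c) => /separated; rewrite fx fy bxy eqxx !orbT => /(_ isT).
by rewrite -(card_in_imset block_inj) (leq_trans (max_card _)) // card_ord.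
Qed.

End GreedyColoring.

Lemma same_quotient a b k : 0 < k -> a %/ k = b %/ k -> a < b + k /\ (b < k -> a < k).
Proof.
move=> k_gt0 ab; split; first by have := ltn_ceil a k_gt0; have := leq_divM b k; rewrite ab; lia.
by move=> b_lt; rewrite -[k]mul1n -ltn_divLR // ab ltn_divLR // mul1n.
Qed.

Lemma card_le_range (T : finType) (f : T -> nat) (A : {pred T}) lo hi :
  {in A &, injective f} -> (forall x, x \in A -> lo <= f x < hi) -> #|A| <= hi - lo.
Proof.
move=> f_inj f_range; rewrite cardE -(size_map f) -(size_iota lo (hi - lo)).
apply: uniq_leq_size => [|_ /mapP [x x_A ->]].
  by rewrite map_inj_in_uniq ?enum_uniq // => x y; rewrite !mem_enum; exact: f_inj.
by rewrite mem_iota; move: x_A; rewrite mem_enum => /f_range; lia.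
Qed.

Lemma square_adj_sym (V : finType) (e : rel V) : symmetric e -> symmetric (square_adj e).
Proof.
move=> e_sym x y; rewrite /square_adj eq_sym e_sym; congr (_ && (_ || _)).
by apply/existsP/existsP => -[z /andP [xz zy]]; exists z; rewrite e_sym andbC e_sym xz.
Qed.

Section Spider.

Variable l : seq nat.
Local Notation m := (size l).
Local Notation V := (spider_vertex l).
(* The non-central vertices v_{i+1,j+1}, encoded as dependent pairs (i; j);
   below, legs are numbered 0..m-1 and depths start at 0 next to the center. *)
Local Notation arm_vertex := {i : 'I_(size l) & 'I_(nth 0 l i)}.

Definition leg (p : arm_vertex) : nat := tag p.
Definition depth (p : arm_vertex) : nat := tagged p.

Lemma leg_lt p : leg p < m. Proof. exact: ltn_ord. Qed.
Lemma depth_lt p : depth p < nth 0 l (leg p). Proof. exact: ltn_ord. Qed.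

Lemma arm_vertex_eq p q : leg p = leg q -> depth p = depth q -> p = q.
Proof.
case: p q => [i j] [i' j']; rewrite /leg /depth /= => /val_inj ii'; subst i'.
by move=> /val_inj ->.
Qed.

Lemma spider_adj_sym : symmetric (@spider_adj l).
Proof. by case=> [p|] [q|] //=; rewrite eq_sym orbC. Qed.

Definition spider_sq (x y : V) : bool :=
  match x, y with
  | None, None => false
  | None, Some q | Some q, None => depth q <= 1
  | Some p, Some q =>
      (leg p == leg q) && (depth p != depth q) &&
        (depth p <= depth q + 2) && (depth q <= depth p + 2)
      || (leg p != leg q) && (depth p == 0) && (depth q == 0)
  end.

Lemma spider_adj_arm (p q : arm_vertex) :
  spider_adj (Some p) (Some q) =
    (leg p == leg q) && (((depth p).+1 == depth q) || ((depth q).+1 == depth p)).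
Proof. by []. Qed.

Lemma spider_adj_center_l (q : arm_vertex) : spider_adj None (Some q) = (depth q == 0).
Proof. by []. Qed.

Lemma spider_adj_center_r (q : arm_vertex) : spider_adj (Some q) None = (depth q == 0).
Proof. by []. Qed.

Lemma square_spider_sq (x y : V) : square_adj (@spider_adj l) x y -> spider_sq x y.
Proof.
case/andP => x_y /orP [].
  case: x y x_y => [p|] [q|] // _; rewrite ?spider_adj_arm ?spider_adj_center_l ?spider_adj_center_r /=.
  - by case/andP=> /eqP ->; rewrite eqxx /=; case/orP=> /eqP <-; rewrite ?eqxx /=; lia.
  - by move/eqP->.
  - by move/eqP->.
case/existsP=> z /andP []; case: x y z x_y => [p|] [q|] [s|] //;
  rewrite ?spider_adj_arm ?spider_adj_center_l ?spider_adj_center_r /=.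
- move=> p_q /andP [/eqP ps ds] /andP [/eqP sq dq]; rewrite ps sq eqxx /=.
  have : depth p != depth q.
    by apply: contraNneq p_q => dpq; rewrite (@arm_vertex_eq p q) // ps sq.
  by move=> /negPf ->; move: ds dq => /orP [] /eqP ds /orP [] /eqP dq; lia.
- move=> p_q /eqP dp /eqP dq; rewrite dp dq eqxx andbF !andbT /=.
  by apply: contraNneq p_q => pq; rewrite (@arm_vertex_eq p q) // dp dq.
- by move=> _ /andP [_ /orP [] /eqP dp] /eqP dq; lia.
- by move=> _ /eqP dp /andP [_ /orP [] /eqP dq]; lia.
Qed.

(* Legs are numbered 0..m-1 with
   legs 0 and 1 short.  First come the tail vertices (depth >= 1 on legs
   1..m-1, plus the whole leg m-1), leg after leg, each from its far end
   inwards; then the center; then the first vertices of legs m-2, ..., 1; and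
   finally leg 0 from the center outwards.  tail_offset i counts the tail
   vertices on legs 1..i-1 (for i < m). *)
Definition tail_offset (i : nat) : nat := \sum_(1 <= t < i) (nth 0 l t).-1.
Definition center_rank : nat := tail_offset m.-1 + nth 0 l m.-1.

Definition arm_rank (i j : nat) : nat :=
  if i == 0 then center_rank + m.-1 + j
  else if (j == 0) && (i < m.-1) then center_rank + (m.-1 - i)
  else tail_offset i + ((nth 0 l i).-1 - j).

Definition rank (v : V) : nat :=
  if v is Some p then arm_rank (leg p) (depth p) else center_rank.

Arguments rank : simpl never.

Lemma rank_center : rank None = center_rank. Proof. by []. Qed.

(* The largest rank: the number of non-central vertices. *)
Definition top_rank : nat := \sum_(i < m) nth 0 l i.

Definition block (v : V) : nat := (top_rank - rank v) %/ m.+1.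

Lemma card_spider : #|V| = top_rank.+1.
Proof.
rewrite card_option card_tagged sumnE big_map big_enum /=.
by congr _.+1; apply: eq_bigr => i _; rewrite card_ord.
Qed.

Lemma tail_offsetS i : 0 < i -> tail_offset i.+1 = tail_offset i + (nth 0 l i).-1.
Proof. by move=> i_gt0; rewrite /tail_offset big_nat_recr. Qed.

Lemma tail_offset_mono : {homo tail_offset : i j / i <= j}.
Proof.
apply: homo_leq => [//|j i k|[|i]]; [exact: leq_trans | by rewrite /tail_offset !big_geq |].
by rewrite [X in _ <= X]tail_offsetS // leq_addr.
Qed.

Section PositiveLegs.

Hypothesis three_legs : 3 <= m.
Hypothesis legs_pos : forall i, i < m -> 0 < nth 0 l i.

(* top_rank counts the tails, the center, the m-2 middle first vertices and leg 0. *)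
Lemma top_rank_split : top_rank = center_rank + m.-2 + nth 0 l 0.
Proof.
have inner : \sum_(1 <= i < m.-1) nth 0 l i = tail_offset m.-1 + (m.-1 - 1) * 1.
  rewrite -sum_nat_const_nat -big_split /=; apply: eq_big_nat => i /andP [_ i_lt].
  by have := @legs_pos i; lia.
have m_eq : m = m.-1.+1 by lia.
rewrite /top_rank /center_rank -(big_mkord xpredT (nth 0 l)) {1}m_eq big_nat_recr //=.
by rewrite big_ltn ?inner; lia.
Qed.

(* The four kinds of non-central vertices and their ranks: leg 0 (above the
   center), the first vertices of legs 1..m-2 (just above the center), the
   first vertex of leg m-1 (just below the center) and the deeper vertices of
   legs 1..m-1 (further below). *)
Variant rank_spec (p : arm_vertex) : nat -> Prop :=
  | RankLeg0 of leg p = 0 : rank_spec p (center_rank + m.-1 + depth p)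
  | RankHub of 0 < leg p < m.-1 & depth p = 0 : rank_spec p (center_rank + (m.-1 - leg p))
  | RankLastHub of leg p = m.-1 & depth p = 0 : rank_spec p center_rank.-1
  | RankTail of 0 < leg p & 0 < depth p
      & tail_offset (leg p) + ((nth 0 l (leg p)).-1 - depth p) < center_rank.-1 :
      rank_spec p (tail_offset (leg p) + ((nth 0 l (leg p)).-1 - depth p)).

Lemma rankP p : rank_spec p (rank (Some p)).
Proof.
change (rank (Some p)) with (arm_rank (leg p) (depth p)); rewrite /arm_rank.
have [leg0 | leg_gt0] := posnP (leg p); first by constructor.
case: ifP => [/andP [/eqP depth0 leg_lt] | not_hub]; first by constructor; rewrite ?leg_gt0.
have last_pos := @legs_pos m.-1 ltac:(lia); have := leg_lt p.
have [depth0 | depth_gt0] := posnP (depth p).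
  move: not_hub; rewrite depth0 /= => /negbT not_lt leg_le.
  have leg_last : leg p = m.-1 by lia.
  rewrite leg_last subn0.
  have -> : tail_offset m.-1 + (nth 0 l m.-1).-1 = center_rank.-1 by rewrite /center_rank; lia.
  by constructor.
constructor=> //; rewrite /center_rank; have := depth_lt p.
have [leg_lt' | leg_last] := ltnP (leg p) m.-1.
  by have := tail_offset_mono leg_lt'; rewrite tail_offsetS //; lia.
have -> : leg p = m.-1 by lia.
lia.
Qed.

Lemma tail_rank_below p (i : nat) : 0 < leg p < i -> 0 < depth p ->
  tail_offset (leg p) + ((nth 0 l (leg p)).-1 - depth p) < tail_offset i.
Proof.
case/andP=> leg_gt0 leg_lt depth_gt0; have := tail_offset_mono leg_lt.
by rewrite tail_offsetS //; have := depth_lt p; lia.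
Qed.

(* The center is not the lowest vertex: leg m-1 is ranked below it. *)
Lemma center_rank_gt0 : 0 < center_rank.
Proof. by have := @legs_pos m.-1; rewrite /center_rank; lia. Qed.

Lemma rank_inj : injective rank.
Proof.
have arm_not_center p : rank (Some p) != center_rank.
  by have := center_rank_gt0; case: rankP => *; lia.
case=> [p|] [q|] // rank_pq; last 2 first.
- by have := arm_not_center p; rewrite rank_pq eqxx.
- by have := arm_not_center q; rewrite -rank_pq eqxx.
congr Some; have := leg_lt p; have := leg_lt q; have := depth_lt p; have := depth_lt q.
move: rank_pq; case: rankP => [lp0 | lp dp0 | lp dp0 | lp dp tp];
  case: rankP => [lq0 | lq dq0 | lq dq0 | lq dq tq]; try lia;
  try by move=> *; apply: arm_vertex_eq; lia.
have [lpq | lqp | lpq] := ltngtP (leg p) (leg q).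
- by have := @tail_rank_below p (leg q); lia.
- by have := @tail_rank_below q (leg p); lia.
by rewrite lpq => *; apply: arm_vertex_eq; lia.
Qed.

Lemma rank_le v : rank v <= top_rank.
Proof.
rewrite top_rank_split; case: v => [p|]; last by rewrite rank_center; lia.
by have := depth_lt p; case: rankP => [lp0 | * | * | *]; rewrite ?lp0; lia.
Qed.

Lemma block_window w v : rank w < rank v -> block w = block v -> rank v <= rank w + m.
Proof.
move=> rank_wv /same_quotient [//|close _]; move: close.
by have := rank_le v; have := rank_le w; lia.
Qed.

Lemma block_lt v : block v < ceil_div #|V| m.+1.
Proof.
rewrite /ceil_div card_spider /block.
have -> : top_rank.+1 + m.+1.-1 = top_rank + 1 * m.+1 by lia.
by rewrite divnDMl // addn1 ltnS leq_div2r // leq_subr.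
Qed.

Definition earlier_conflicts (v : V) : {pred V} :=
  [pred w | (rank w < rank v) &&
    [|| square_adj (@spider_adj l) v w, square_adj (@spider_adj l) w v | block w == block v]].

Lemma earlier_conflictP v w : w \in earlier_conflicts v ->
  rank w < rank v /\ (spider_sq v w \/ block w = block v).
Proof.
rewrite inE (square_adj_sym spider_adj_sym w) orbA orbb => /andP [-> /orP [] conflict].
  by split; [|left; apply: square_spider_sq].
by split; [|right; apply/eqP].
Qed.

Lemma window_conflicts v :
  (forall w, rank w < rank v -> spider_sq v w -> rank v <= rank w + m) ->
  #|earlier_conflicts v| < m.+1.
Proof.
move=> near_nbrs; rewrite ltnS.
apply: leq_trans (@card_le_range _ rank _ (rank v - m) (rank v) _ _) _.
- by move=> x y _ _; apply: rank_inj.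
- move=> w /earlier_conflictP [rank_wv [/(near_nbrs _ rank_wv) | /(block_window rank_wv)]]; lia.
- lia.
Qed.

Section ShortLegs.

Hypothesis short_leg0 : nth 0 l 0 <= 2.
Hypothesis short_leg1 : nth 0 l 1 <= 2.

Lemma block_near_center w v : center_rank <= rank v -> rank w < rank v ->
  block w = block v -> center_rank.-1 <= rank w.
Proof.
have := top_rank_split; have := @legs_pos 0 ltac:(lia) => leg0_pos top_split.
move=> center_v rank_wv /same_quotient [//|_ top_block].
by have := rank_le w; have := top_block ltac:(lia); lia.
Qed.

Lemma near_center_conflicts v (B : {pred V}) : center_rank <= rank v ->
  (forall w, rank w < rank v -> spider_sq v w -> center_rank.-1 <= rank w \/ w \in B) ->
  rank v - center_rank.-1 + #|B| <= m -> #|earlier_conflicts v| < m.+1.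
Proof.
move=> center_v nbrs small; rewrite ltnS; apply: leq_trans small.
pose W := [pred w | center_rank.-1 <= rank w < rank v].
have sub : earlier_conflicts v \subset [predU W & B].
  apply/subsetP=> w /earlier_conflictP [rank_wv [/(nbrs _ rank_wv) | same_block]];
    rewrite !inE rank_wv andbT; first by case=> ->; rewrite ?orbT.
  by rewrite (block_near_center center_v rank_wv same_block).
have card_W : #|W| <= rank v - center_rank.-1.
  by apply: card_le_range => [x y _ _ | w /andP []]; [apply: rank_inj | lia].
apply: leq_trans (subset_leq_card sub) (leq_trans _ (leq_add card_W (leqnn #|B|))).
by rewrite -cardUI leq_addr.
Qed.

(* The center: its earlier neighbours are the first vertex of leg m-1 and the
   second vertices of legs 1..m-1. *)
Lemma center_conflicts : #|earlier_conflicts None| < m.+1.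
Proof.
pose B := [pred w : V | if w is Some q then (leg q != 0) && (depth q == 1) else false].
have card_B : #|B| <= m - 1.
  apply: (@card_le_range _ (fun w : V => if w is Some q then leg q else 0)).
    move=> [p|] [q|] //; rewrite !inE => /andP [_ /eqP dp] /andP [_ /eqP dq] lpq.
    by congr Some; apply: arm_vertex_eq; rewrite // dp dq.
  by move=> [q|] //; rewrite inE => /andP [lq _]; have := leg_lt q; lia.
apply: (near_center_conflicts (B := B)) => //.
  case=> [q|] //=; rewrite inE rank_center; case: rankP => *; lia.
rewrite rank_center; apply: leq_trans (leq_add (leqnn _) card_B) _; have := center_rank_gt0; lia.
Qed.

(* The first vertex of a middle leg i: its earlier neighbours lie in the top
   block (center, first vertices of later legs) or are the second and third
   vertices of leg i; the latter are at most one when i = 1, since l_1 <= 2. *)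
Lemma hub_conflicts p : 0 < leg p < m.-1 -> depth p = 0 ->
  #|earlier_conflicts (Some p)| < m.+1.
Proof.
move=> hub depth0.
pose B := [pred w : V | if w is Some q then (leg q == leg p) && (0 < depth q <= 2) else false].
have card_B : #|B| <= minn 3 (nth 0 l (leg p)) - 1.
  apply: (@card_le_range _ (fun w : V => if w is Some q then depth q else 0)).
    move=> [q|] [s|] //; rewrite !inE => /andP [/eqP lq _] /andP [/eqP ls _] dqs.
    by congr Some; apply: arm_vertex_eq; rewrite // lq ls.
  move=> [q|] //; rewrite inE => /andP [/eqP lq dq].
  by have := depth_lt q; rewrite lq; lia.
have rank_p : rank (Some p) = center_rank + (m.-1 - leg p) by case: rankP => *; lia.
apply: (near_center_conflicts (B := B)); first by rewrite rank_p leq_addr.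
  case=> [q|] rank_qp; last by rewrite rank_center; lia.
  rewrite /= inE depth0; case: (rankP q) => *; lia.
rewrite rank_p; apply: leq_trans (leq_add (leqnn _) card_B) _.
by have := center_rank_gt0; have := short_leg1; case: (leg p) hub => [|[|i]] //=; lia.
Qed.

(* A vertex of leg 0: since l_0 <= 2 all its earlier neighbours (the center,
   the first vertices of the other legs, leg 0 itself) are at most m below it. *)
Lemma leg0_conflicts p : leg p = 0 -> #|earlier_conflicts (Some p)| < m.+1.
Proof.
move=> leg0; have := depth_lt p; rewrite leg0 => depth_le.
apply: window_conflicts => -[q|] rank_qp /=; have := center_rank_gt0.
  by move: rank_qp; case: (rankP p); case: (rankP q) => *; lia.
by rewrite rank_center; case: (rankP p) => *; lia.
Qed.

(* A vertex below the center: its earlier neighbours are on its own leg, within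
   distance 2, hence at most m below it. *)
Lemma below_center_conflicts p :
  rank (Some p) < center_rank -> #|earlier_conflicts (Some p)| < m.+1.
Proof.
move=> below; apply: window_conflicts => -[q|] rank_qp /=; last first.
  by rewrite rank_center in rank_qp; lia.
have := depth_lt p; have := depth_lt q; have [same_leg | other_leg] := eqVneq (leg q) (leg p).
  have := congr1 (nth 0 l) same_leg; have := congr1 tail_offset same_leg.
  have last_leg : leg p = m.-1 -> tail_offset (leg p) + nth 0 l (leg p) = center_rank.
    by move=> ->.
  by move: below rank_qp; case: (rankP p); case: (rankP q) => *; lia.
by move: below rank_qp; case: (rankP p); case: (rankP q) => *; lia.
Qed.

Lemma few_earlier_conflicts v : #|earlier_conflicts v| < m.+1.
Proof.
case: v => [p|]; last exact: center_conflicts.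
have : [\/ leg p = 0, 0 < leg p < m.-1 /\ depth p = 0 | rank (Some p) < center_rank].
  by have := center_rank_gt0; case: (rankP p) => *; [apply: Or31 | apply: Or32 | apply: Or33 ..]; lia.
case=> [leg0 | [hub depth0] | below].
- exact: leg0_conflicts.
- exact: hub_conflicts.
- exact: below_center_conflicts.
Qed.

End ShortLegs.

End PositiveLegs.

End Spider.

Theorem lemma2p6 (l : seq nat) :
  3 <= size l ->
  all (fun x => 0 < x) l ->
  sorted leq l ->
  nth 0 l 1 <= 2 ->
  equitably_choosable (square_adj (@spider_adj l)) (size l).+1.
Proof.
move=> three_legs /(all_nthP 0) legs_pos l_sorted short_leg1.
have short_leg0 : nth 0 l 0 <= 2.
  by move/(sortedP 0)/(_ 0 (ltnW three_legs)): l_sorted => /leq_trans; apply.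
apply: (@greedy_equitable _ _ (@rank l) (rank_inj three_legs legs_pos) _ (@block l)).
- by move=> x; rewrite /square_adj eqxx.
- exact: block_lt.
- exact: few_earlier_conflicts.
Qed.
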